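(* Let $K_t(\omega)$ be a weighted complete graph on $[t]$. Suppose $K_t(\omega)$ contains $p$ copies of $C_5$, $q$ copies of $K_4$, $r$ copies of $K_3$ and $s$ single edges, such that all these $p+q+r+s$ subgraphs are pairwise vertex-disjoint and each of them is half (every edge of each of these subgraphs has weight $\frac12$). Then $$2g(K_t(\omega))\le 1-\frac{30}{30t-75p-72q-45r-20s}.$$
   Context: A weighted complete graph $K_t(\omega)$ is the complete graph on vertex set $[t]$ in which every edge $ij$ has a weight $\omega(i,j)\in\{\frac12,1\}$; an edge is called half if its weight is $\frac12$ and full if its weight is $1$, and a subgraph is half if all its edges are half. Its edge density is $g(K_t(\omega))=\max_{\mathbf u}\sum_{1\le i<j\le t}\omega(i,j)u_iu_j$, the maximum taken over all $\mathbf u=(u_1,\dots,u_t)$ with $u_i\ge 0$ and $\sum_i u_i=1$. *)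

From HB Require Import structures.
From mathcomp Require Import all_boot all_order all_algebra.
From mathcomp Require Import all_classical all_reals.
Set Implicit Arguments. Unset Strict Implicit. Unset Printing Implicit Defensive.
Import Order.TTheory GRing.Theory Num.Theory.
Local Open Scope ring_scope.
Local Open Scope classical_set_scope.

(* A weighted complete graph K_t(omega) on vertex set 'I_t (= [t]):
   omega is symmetric and every edge ij (i <> j) has weight 1/2 or 1.
   The diagonal values of omega are irrelevant. *)
Definition weighted_complete (R : realType) (t : nat) (w : 'I_t -> 'I_t -> R) :=
  (forall i j, w i j = w j i) /\
  (forall i j, i != j -> w i j = 1/2 \/ w i j = 1).

Definition in_simplex (R : realType) (t : nat) (u : 'I_t -> R) :=
  (forall i, 0 <= u i) /\ \sum_(i < t) u i = 1.

Definition lagr (R : realType) (t : nat) (w : 'I_t -> 'I_t -> R) (u : 'I_t -> R) : R :=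
  \sum_(i < t) \sum_(j < t | (i < j)%N) w i j * u i * u j.

Definition edge_density (R : realType) (t : nat) (w : 'I_t -> 'I_t -> R) : R :=
  sup [set x | exists u : 'I_t -> R, in_simplex u /\ x = lagr w u].

(* A copy of C_5 given by an (injective) vertex map f : 'I_5 -> 'I_t whose
   cycle edges f k -- f (k+1 mod 5) all have weight 1/2. *)
Definition half_C5 (R : realType) (t : nat) (w : 'I_t -> 'I_t -> R)
  (f : 'I_5 -> 'I_t) := forall k : 'I_5, w (f k) (f (ordS k)) = 1/2.

Definition half_K (R : realType) (t n : nat) (w : 'I_t -> 'I_t -> R)
  (f : 'I_n -> 'I_t) := forall k l : 'I_n, k != l -> w (f k) (f l) = 1/2.

(* Injectivity
   of this map = each copy is a genuine subgraph and all copies are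
   pairwise vertex-disjoint. *)
Definition all_vertices (t p q r s : nat)
  (c5 : 'I_p -> 'I_5 -> 'I_t) (k4 : 'I_q -> 'I_4 -> 'I_t)
  (k3 : 'I_r -> 'I_3 -> 'I_t) (k2 : 'I_s -> 'I_2 -> 'I_t)
  (x : ('I_p * 'I_5) + (('I_q * 'I_4) + (('I_r * 'I_3) + ('I_s * 'I_2))))
  : 'I_t :=
  match x with
  | inl (a, k) => c5 a k
  | inr (inl (a, k)) => k4 a k
  | inr (inr (inl (a, k))) => k3 a k
  | inr (inr (inr (a, k))) => k2 a k
  end.

From HB Require Import structures.
From mathcomp Require Import all_boot all_order all_algebra.
From mathcomp Require Import all_classical all_reals.
From mathcomp Require Import ring lra.
Import Order.TTheory GRing.Theory Num.Theory.
Local Open Scope ring_scope.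
Set Implicit Arguments. Unset Strict Implicit. Unset Printing Implicit Defensive.

(* Fix u in the simplex and a parameter lam.  Writing
     slack i j = (1 - w i j) u_i u_j  (i <> j),   slack i i = 0,
   which is nonnegative because all weights are at most 1, one has the exact
   identity (using sum_i u_i = 1)
     1 - 2 L(u) = D + 2 lam - t lam^2,
     D = sum_i (u_i - lam)^2 + sum_{i,j} slack i j.
   The quantity D restricted to a set of vertices only decreases, and on
   disjoint vertex sets it is superadditive.  On a half C5 it is at least
   5/2 lam^2 (a cyclic sum of squares), on a half K_n at least
   n(n-1)/(n+1) lam^2 (an exact sum of squares).  Adding the blocks gives
   2 L(u) <= 1 - 2 lam + N lam^2 with N = t - 5/2 p - 12/5 q - 3/2 r - 2/3 s,
   and lam = 1/N yields 2 L(u) <= 1 - 1/N, which is the theorem. *)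

Section SumFacts.
Variable R : realType.

Lemma sum_inj_le (I J : finType) (g : I -> J) (F : J -> R) :
  injective g -> (forall j, 0 <= F j) -> \sum_i F (g i) <= \sum_j F j.
Proof.
move=> g_inj F_ge0; rewrite -(big_imset F (in2W g_inj)) /=.
rewrite [X in _ <= X](bigID [in [set g i | i in I]]) /=.
by rewrite lerDl sumr_ge0.
Qed.

Lemma sum_lower_bound m (F : 'I_m -> R) b :
  (forall a, b <= F a) -> m%:R * b <= \sum_a F a.
Proof.
move=> bF; rewrite mulr_natl -[X in b *+ X](card_ord m) -sumr_const.
exact: ler_sum.
Qed.

Lemma sumsq_shift n (x : 'I_n -> R) m :
  \sum_k (x k - m) ^+ 2 = \sum_k x k ^+ 2 - 2 * m * \sum_k x k + n%:R * m ^+ 2.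
Proof.
under eq_bigr do rewrite sqrrB.
rewrite big_split /= sumrB /= sumr_const card_ord.
rewrite sumrMnl -mulr_suml -[m ^+ 2 *+ n]mulr_natl -mulr_natl; lra.
Qed.

Lemma sum_offdiag n (x : 'I_n -> R) :
  \sum_k \sum_(l | l != k) x k * x l = (\sum_k x k) ^+ 2 - \sum_k x k ^+ 2.
Proof.
rewrite expr2 mulr_suml -sumrB; apply: eq_bigr => k _.
by rewrite mulr_sumr [X in _ = X - _](bigD1 k) //= expr2 addrC addrK.
Qed.

Lemma sym_pairs t (F : 'I_t -> 'I_t -> R) : (forall i j, F i j = F j i) ->
  \sum_i \sum_(j | j != i) F i j = 2 * \sum_(i < t) \sum_(j < t | (i < j)%N) F i j.
Proof.
move=> F_sym.
have split_ne (i : 'I_t) : \sum_(j | j != i) F i j =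
    \sum_(j < t | (i < j)%N) F i j + \sum_(j < t | (j < i)%N) F i j.
  rewrite (bigID (fun j : 'I_t => (i < j)%N)) /=; congr (_ + _); apply: eq_bigl => j;
  by rewrite -val_eqE /=; case: (ltngtP i j).
rewrite (eq_bigr _ (fun i _ => split_ne i)) big_split /=.
have -> : \sum_(i < t) \sum_(j < t | (j < i)%N) F i j =
          \sum_(i < t) \sum_(j < t | (i < j)%N) F i j.
  rewrite (eq_bigr _ (fun i _ => big_mkcond _ _)) /= exchange_big /=.
  apply: eq_bigr => i _; rewrite [RHS]big_mkcond; apply: eq_bigr => j _.
  by rewrite F_sym.
lra.
Qed.

Lemma cycle_identity n (x : 'I_n -> R) lam :
  \sum_k (x k - lam) ^+ 2 + \sum_k x k * x (ordS k) =
  n%:R / 2 * lam ^+ 2 + \sum_k (x k + x (ordS k) - lam) ^+ 2 / 2.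
Proof.
have shift (F : 'I_n -> R) : \sum_k F (ordS k) = \sum_k F k.
  by rewrite [RHS](reindex_inj (@ordS_inj n)).
have -> : \sum_k (x k + x (ordS k) - lam) ^+ 2 / 2 =
    \sum_k ((x k - lam) ^+ 2 / 2 + (x (ordS k) - lam) ^+ 2 / 2
            + x k * x (ordS k) - lam ^+ 2 / 2).
  by apply: eq_bigr => k _; field.
rewrite !big_split /= sumrN sumr_const card_ord.
rewrite (shift (fun k => (x k - lam) ^+ 2 / 2)) -mulr_suml -mulr_natl; lra.
Qed.

End SumFacts.

Section Defect.
Variables (R : realType) (t : nat) (w : 'I_t -> 'I_t -> R) (u : 'I_t -> R) (lam : R).
Hypothesis w_sym : forall i j, w i j = w j i.
Hypothesis w_le1 : forall i j, i != j -> w i j <= 1.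
Hypothesis u_ge0 : forall i, 0 <= u i.

Definition slack (i j : 'I_t) : R := if i == j then 0 else (1 - w i j) * u i * u j.

Definition defect_on (X : finType) (c : X -> 'I_t) : R :=
  \sum_x (u (c x) - lam) ^+ 2 + \sum_x \sum_y slack (c x) (c y).

Lemma slack_ge0 i j : 0 <= slack i j.
Proof.
rewrite /slack; case: eqP => [//|/eqP ij].
by rewrite -mulrA mulr_ge0 ?mulr_ge0 // subr_ge0 w_le1.
Qed.

Lemma slack_sym i j : slack i j = slack j i.
Proof. by rewrite /slack eq_sym w_sym; case: eqP => // _; ring. Qed.

Lemma slack_half i j : i != j -> w i j = 1 / 2 -> slack i j = u i * u j / 2.
Proof. by move=> ij wij; rewrite /slack (negbTE ij) wij; field. Qed.

Lemma sum_slack_row i :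
  \sum_j slack i j = \sum_(j | j != i) (1 - w i j) * u i * u j.
Proof.
rewrite (bigD1 i) //= {1}/slack eqxx add0r; apply: eq_bigr => j ji.
by rewrite /slack eq_sym (negbTE ji).
Qed.

Lemma defect_on_inj (X : finType) (c : X -> 'I_t) :
  injective c -> defect_on c <= defect_on id.
Proof.
move=> c_inj; apply: lerD.
  exact: (sum_inj_le (F := fun i => (u i - lam) ^+ 2) c_inj (fun _ => sqr_ge0 _)).
rewrite !pair_big /=.
apply: (sum_inj_le (g := fun z => (c z.1, c z.2)) (F := fun z => slack z.1 z.2)).
  by move=> [x y] [x' y'] /= [/c_inj -> /c_inj ->].
by move=> z; exact: slack_ge0.
Qed.

(* The defect is superadditive over a disjoint union of vertex sets: the
   slack between the two parts is dropped. *)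
Lemma defect_on_sum (A B : finType) (c : A + B -> 'I_t) :
  defect_on (c \o inl) + defect_on (c \o inr) <= defect_on c.
Proof.
rewrite /defect_on big_sumType /= addrACA lerD2l big_sumType /=.
under [X in _ <= X + _]eq_bigr do rewrite big_sumType /=.
under [X in _ <= _ + X]eq_bigr do rewrite big_sumType /=.
rewrite !big_split /= addrACA lerD ?lerDl ?lerDr //;
by do 2![apply: sumr_ge0 => ? _]; exact: slack_ge0.
Qed.

Lemma defect_on_prod (I K : finType) (c : I * K -> 'I_t) :
  \sum_a defect_on (fun k => c (a, k)) <= defect_on c.
Proof.
have split_pair (F : I * K -> R) : \sum_z F z = \sum_a \sum_k F (a, k).
  by rewrite pair_big; apply: eq_bigr => -[].
rewrite /defect_on big_split /= split_pair lerD2l split_pair.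
apply: ler_sum => a _; apply: ler_sum => k _.
rewrite split_pair (bigD1 a) //= lerDl.
by apply: sumr_ge0 => a' _; apply: sumr_ge0 => l _; exact: slack_ge0.
Qed.

(* On a half K_n, D is n(n-1)/(n+1) lam^2 plus the squares of the deviations
   of u from 2 lam/(n+1) and of sum u from 2 n lam/(n+1). *)
Lemma defect_on_clique n (c : 'I_n -> 'I_t) : injective c -> half_K w c ->
  n%:R * (n%:R - 1) / (n%:R + 1) * lam ^+ 2 <= defect_on c.
Proof.
move=> c_inj c_half; set x := fun k => u (c k).
set S := \sum_k x k; set Q := \sum_k x k ^+ 2.
have off : \sum_k \sum_l slack (c k) (c l) = (S ^+ 2 - Q) / 2.
  rewrite -sum_offdiag mulr_suml; apply: eq_bigr => k _.
  rewrite (bigD1 k) //= {1}/slack eqxx add0r mulr_suml.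
  apply: eq_bigr => l lk; have kl : k != l by rewrite eq_sym.
  by rewrite slack_half ?(inj_eq c_inj) ?c_half.
set mu := 2 * lam / (n%:R + 1).
have n1 : n%:R + 1 != 0 :> R by rewrite natr1 pnatr_eq0.
have -> : defect_on c = n%:R * (n%:R - 1) / (n%:R + 1) * lam ^+ 2
    + \sum_k (x k - mu) ^+ 2 / 2 + (S - 2 * n%:R * lam / (n%:R + 1)) ^+ 2 / 2.
  by rewrite /defect_on off -mulr_suml !sumsq_shift -/S -/Q /mu; field.
rewrite -addrA lerDl; apply: addr_ge0; first apply: sumr_ge0 => k _;
by rewrite divr_ge0 ?sqr_ge0.
Qed.

(* On a half C5, D is at least 5/2 lam^2: the cycle edges alone already
   contribute the cross terms of cycle_identity. *)
Lemma defect_on_C5 (c : 'I_5 -> 'I_t) : injective c -> half_C5 w c ->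
  5 / 2 * lam ^+ 2 <= defect_on c.
Proof.
move=> c_inj c_half; set x := fun k => u (c k).
have edge k : slack (c k) (c (ordS k)) = x k * x (ordS k) / 2.
  apply: slack_half (c_half k); rewrite (inj_eq c_inj).
  by case: k => [[|[|[|[|[|?]]]]] ?].
have rows k : slack (c k) (c (ordS k)) + slack (c k) (c (ord_pred k))
    <= \sum_l slack (c k) (c l).
  rewrite (bigD1 (ordS k)) // (bigD1 (ord_pred k)) /=; last first.
    by case: k => [[|[|[|[|[|?]]]]] ?].
  by rewrite addrA lerDl sumr_ge0 // => l _; exact: slack_ge0.
have cyc : \sum_k x k * x (ordS k) <= \sum_k \sum_l slack (c k) (c l).
  apply: le_trans (ler_sum _ (fun k _ => rows k)).
  rewrite big_split /= [X in _ <= _ + X](reindex_inj (@ordS_inj 5)) /=.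
  under [X in _ <= _ + X]eq_bigr do rewrite ordSK slack_sym.
  under eq_bigr do rewrite (splitr (x _ * _)).
  by rewrite big_split /= (eq_bigr _ (fun k _ => edge k)).
have := cycle_identity x lam; rewrite /defect_on.
have : 0 <= \sum_k (x k + x (ordS k) - lam) ^+ 2 / 2.
  by apply: sumr_ge0 => k _; rewrite divr_ge0 ?sqr_ge0.
lra.
Qed.

Lemma lagr_defect : \sum_i u i = 1 ->
  1 - 2 * lagr w u = defect_on id + 2 * lam - t%:R * lam ^+ 2.
Proof.
move=> u_sum.
have two_lagr : 2 * lagr w u = \sum_i \sum_(j | j != i) w i j * u i * u j.
  by rewrite sym_pairs // => i j; rewrite w_sym; ring.
have one : 1 = \sum_i u i ^+ 2 + \sum_i \sum_(j | j != i) u i * u j.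
  by rewrite sum_offdiag u_sum; ring.
have rows i : \sum_j slack i j =
    \sum_(j | j != i) u i * u j - \sum_(j | j != i) w i j * u i * u j.
  by rewrite sum_slack_row -sumrB; apply: eq_bigr => j _; ring.
rewrite /defect_on /= (eq_bigr _ (fun i _ => rows i)) sumrB sumsq_shift u_sum.
rewrite two_lagr {1}one; ring.
Qed.

End Defect.

Section Blocks.
Variables (R : realType) (t p q r s : nat).
Variables (c5 : 'I_p -> 'I_5 -> 'I_t) (k4 : 'I_q -> 'I_4 -> 'I_t).
Variables (k3 : 'I_r -> 'I_3 -> 'I_t) (k2 : 'I_s -> 'I_2 -> 'I_t).
Hypothesis blocks_inj : injective (all_vertices c5 k4 k3 k2).

Lemma card_blocks : (p * 5 + (q * 4 + (r * 3 + s * 2)) <= t)%N.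
Proof. by have := leq_card _ blocks_inj; rewrite !card_sum !card_prod !card_ord. Qed.

Lemma defect_on_blocks (w : 'I_t -> 'I_t -> R) (u : 'I_t -> R) (lam : R) :
  (forall i j, i != j -> w i j <= 1) -> (forall i, 0 <= u i) ->
  \sum_a defect_on w u lam (c5 a) + \sum_a defect_on w u lam (k4 a)
  + \sum_a defect_on w u lam (k3 a) + \sum_a defect_on w u lam (k2 a)
  <= defect_on w u lam (all_vertices c5 k4 k3 k2).
Proof.
move=> w_le1 u_ge0; set f := all_vertices c5 k4 k3 k2.
have sum_le := defect_on_sum lam w_le1 u_ge0.
have prod_le := defect_on_prod lam w_le1 u_ge0.
rewrite -!addrA; apply: le_trans (sum_le _ _ f).
apply: lerD; first exact: (prod_le _ _ (f \o inl)).
apply: le_trans (sum_le _ _ (f \o inr)).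
apply: lerD; first exact: (prod_le _ _ (f \o inr \o inl)).
apply: le_trans (sum_le _ _ (f \o inr \o inr)).
apply: lerD; first exact: (prod_le _ _ (f \o inr \o inr \o inl)).
exact: (prod_le _ _ (f \o inr \o inr \o inr)).
Qed.

Lemma block_C5_inj a : injective (c5 a).
Proof. by move=> k l e; case: (@blocks_inj (inl (a, k)) (inl (a, l)) e). Qed.

Lemma block_K4_inj a : injective (k4 a).
Proof. by move=> k l e; case: (@blocks_inj (inr (inl (a, k))) (inr (inl (a, l))) e). Qed.

Lemma block_K3_inj a : injective (k3 a).
Proof.
by move=> k l e; case: (@blocks_inj (inr (inr (inl (a, k)))) (inr (inr (inl (a, l)))) e).
Qed.

Lemma block_K2_inj a : injective (k2 a).
Proof.
by move=> k l e; case: (@blocks_inj (inr (inr (inr (a, k)))) (inr (inr (inr (a, l)))) e).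
Qed.

End Blocks.

Lemma lagr_quadratic_bound (R : realType) (t p q r s : nat)
  (w : 'I_t -> 'I_t -> R)
  (c5 : 'I_p -> 'I_5 -> 'I_t) (k4 : 'I_q -> 'I_4 -> 'I_t)
  (k3 : 'I_r -> 'I_3 -> 'I_t) (k2 : 'I_s -> 'I_2 -> 'I_t) (u : 'I_t -> R) lam :
  weighted_complete w ->
  injective (all_vertices c5 k4 k3 k2) ->
  (forall a, half_C5 w (c5 a)) ->
  (forall a, half_K w (k4 a)) ->
  (forall a, half_K w (k3 a)) ->
  (forall a, half_K w (k2 a)) ->
  in_simplex u ->
  2 * lagr w u <= 1 - 2 * lam +
    (t%:R - 5 / 2 * p%:R - 12 / 5 * q%:R - 3 / 2 * r%:R - 2 / 3 * s%:R) * lam ^+ 2.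
Proof.
move=> [w_sym w_half] f_inj h5 h4 h3 h2 [u_ge0 u_sum].
have w_le1 i j : i != j -> w i j <= 1 by move/w_half => [] ->; lra.
have C5 := sum_lower_bound (fun a => defect_on_C5 lam w_sym w_le1 u_ge0
                                        (block_C5_inj f_inj (a := a)) (h5 a)).
have K4 := sum_lower_bound (fun a => defect_on_clique u lam (block_K4_inj f_inj (a := a)) (h4 a)).
have K3 := sum_lower_bound (fun a => defect_on_clique u lam (block_K3_inj f_inj (a := a)) (h3 a)).
have K2 := sum_lower_bound (fun a => defect_on_clique u lam (block_K2_inj f_inj (a := a)) (h2 a)).
have := defect_on_blocks c5 k4 k3 k2 lam w_le1 u_ge0.
have := defect_on_inj lam w_le1 u_ge0 f_inj.
have := lagr_defect lam w_sym u_sum.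
have c4 : 4%:R * (4%:R - 1) / (4%:R + 1) = 12 / 5 :> R by field.
have c3 : 3%:R * (3%:R - 1) / (3%:R + 1) = 3 / 2 :> R by field.
have c2 : 2%:R * (2%:R - 1) / (2%:R + 1) = 2 / 3 :> R by field.
rewrite c4 in K4; rewrite c3 in K3; rewrite c2 in K2; lra.
Qed.

Local Open Scope classical_set_scope.

Lemma edge_density_le (R : realType) t (w : 'I_t -> 'I_t -> R) (M : R) :
  (0 < t)%N -> (forall u, in_simplex u -> 2 * lagr w u <= M) ->
  2 * edge_density w <= M.
Proof.
move=> t_gt0 lagr_le; suff : edge_density w <= M / 2 by lra.
set e := fun i : 'I_t => (i == Ordinal t_gt0)%:R : R.
have e_simplex : in_simplex e.
  split=> [i|]; first exact: ler0n.
  rewrite (bigD1 (Ordinal t_gt0)) //= big1 ?addr0 //= => i /negbTE.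
  by rewrite /e => ->.
apply: ge_sup; first by exists (lagr w e), e.
by move=> x [u [u_simplex ->]]; have := lagr_le u u_simplex; lra.
Qed.

(* On zero vertices the simplex is empty and the density is sup set0 = 0. *)
Lemma edge_density_dim0 (R : realType) t (w : 'I_t -> 'I_t -> R) :
  t = 0%N -> edge_density w = 0.
Proof.
move=> t0; subst t; rewrite /edge_density (_ : [set x | _] = set0) ?sup0 //.
apply/seteqP; split=> x // [u [[_]]]; rewrite big_ord0 => /eqP.
by rewrite eq_sym oner_eq0.
Qed.

Theorem mainTheorem6 (R : realType) (t p q r s : nat)
  (w : 'I_t -> 'I_t -> R)
  (c5 : 'I_p -> 'I_5 -> 'I_t) (k4 : 'I_q -> 'I_4 -> 'I_t)
  (k3 : 'I_r -> 'I_3 -> 'I_t) (k2 : 'I_s -> 'I_2 -> 'I_t) :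
  weighted_complete w ->
  injective (all_vertices c5 k4 k3 k2) ->
  (forall a, half_C5 w (c5 a)) ->
  (forall a, half_K w (k4 a)) ->
  (forall a, half_K w (k3 a)) ->
  (forall a, half_K w (k2 a)) ->
  2 * edge_density w <=
    1 - 30 / (30 * t%:R - 75 * p%:R - 72 * q%:R - 45 * r%:R - 20 * s%:R).
Proof.
move=> w_complete f_inj h5 h4 h3 h2; have count := card_blocks f_inj.
case: (posnP t) => [t0 | t_gt0].
  move: count; rewrite [t in (_ <= t)%N]t0 leqn0 !addn_eq0 !muln_eq0 !orbF.
  case/and4P=> /eqP-> /eqP-> /eqP-> /eqP->.
  rewrite edge_density_dim0 // [in t%:R]t0 !mulr0 !subr0 invr0 mulr0; lra.
set N : R := t%:R - 5 / 2 * p%:R - 12 / 5 * q%:R - 3 / 2 * r%:R - 2 / 3 * s%:R.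
have N_gt0 : 0 < N.
  move: count; rewrite -(ler_nat R) !natrD !natrM /N.
  have := ler0n R p; have := ler0n R q; have := ler0n R r; have := ler0n R s.
  have : 1 <= t%:R :> R by rewrite ler1n.
  lra.
have -> : 30 * t%:R - 75 * p%:R - 72 * q%:R - 45 * r%:R - 20 * s%:R = 30 * N.
  by rewrite /N; lra.
apply: edge_density_le t_gt0 _ => u u_simplex.
(* The optimal choice lam = 1/N turns 1 - 2 lam + N lam^2 into 1 - 1/N. *)
have := lagr_quadratic_bound N^-1 w_complete f_inj h5 h4 h3 h2 u_simplex.
have -> : 1 - 2 * N^-1 + N * N^-1 ^+ 2 = 1 - 30 / (30 * N).
  by field; rewrite gt_eqF.
by [].
Qed.
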